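(* Let $0\le\gamma\le1$ and let $g\colon\{0,1\}^m\to\{0,1\}^n$ be a $(d,r)$-local function. Then $$\|g(\mathcal{U}^m)-\mathcal{U}^n_\gamma\|\ge 1-2\exp\left\{-\frac{\mathsf{err}(\gamma,d)^2\cdot r}{2}\right\}.$$
   Context: $\mathcal{U}^m$ is uniform on $\{0,1\}^m$; $\mathcal{U}^n_\gamma$ is the product distribution on $\{0,1\}^n$ with each bit independently $1$ with probability $\gamma$. A function $g\colon\{0,1\}^m\to\{0,1\}^n$ is $d$-local if each output bit depends on at most $d$ input bits; for an output index $i$, let $I_g(i)\subseteq[m]$ be the set of input coordinates on which output bit $i$ depends. Output bits $i_1,\dots,i_r$ are non-connected if the sets $I_g(i_1),\dots,I_g(i_r)$ are pairwise disjoint. $g$ is $(d,r)$-local if it is $d$-local and has $r$ non-connected output bits. $\mathsf{err}(\gamma,t)$ is the minimum distance of $\gamma$ to an integer multiple of $2^{-t}$. $\|\cdot\|$ is total variation distance. *)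

From HB Require Import structures.
From mathcomp Require Import all_boot all_order all_algebra.
From mathcomp Require Import boolp classical_sets reals.
From mathcomp.analysis Require Import sequences exp.
Set Implicit Arguments. Unset Strict Implicit. Unset Printing Implicit Defensive.
Import Order.TTheory GRing.Theory Num.Theory.
Local Open Scope ring_scope.


Definition bits (n : nat) := {ffun 'I_n -> bool}.

Definition flip (m : nat) (x : bits m) (j : 'I_m) : bits m :=
  [ffun k => if k == j then ~~ x k else x k].

Definition depset (m n : nat) (g : bits m -> bits n) (i : 'I_n) : {set 'I_m} :=
  [set j | [exists x : bits m, g x i != g (flip x j) i]].

Definition d_local (m n d : nat) (g : bits m -> bits n) : Prop :=
  forall i : 'I_n, (#|depset g i| <= d)%N.

Definition has_nonconnected (m n r : nat) (g : bits m -> bits n) : Prop :=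
  exists S : {set 'I_n}, #|S| = r /\
    forall i1 i2, i1 \in S -> i2 \in S -> i1 != i2 ->
      [disjoint depset g i1 & depset g i2].

Definition dr_local (m n d r : nat) (g : bits m -> bits n) : Prop :=
  d_local d g /\ has_nonconnected r g.

Definition pushU (R : realType) (m n : nat) (g : bits m -> bits n) (y : bits n) : R :=
  #|[set x : bits m | g x == y]|%:R / (2 ^+ m).

Definition biasedU (R : realType) (n : nat) (gamma : R) (y : bits n) : R :=
  \prod_(i < n) (if y i then gamma else 1 - gamma).

Definition tvdist (R : realType) (n : nat) (P Q : bits n -> R) : R :=
  2^-1 * \sum_(y : bits n) `|P y - Q y|.

Definition err (R : realType) (gamma : R) (t : nat) : R :=
  inf [set `|gamma - k%:~R / 2 ^+ t| | k in [set: int]]%classic.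

(* Write P = g(U^m) and Q = U^n_gamma, so that ||P - Q|| = 1 - sum_y min(P y, Q y).
   The r non-connected output bits of g(U^m) are independent Bernoulli(p_i), and
   each p_i is a multiple of 2^-d since bit i depends on at most d inputs, whence
   |p_i - gamma| >= err(gamma, d).  Bounding min(a, b) <= (a W + b / W) / 2 with a
   product weight W gives sum_y min(P y, Q y) <= prod_i BC(p_i, gamma), where the
   Bhattacharyya coefficient BC(p, q) = sqrt(pq) + sqrt((1-p)(1-q)) satisfies
   BC(p, q)^2 <= 1 - (p - q)^2 <= exp(-(p - q)^2). *)

From HB Require Import structures.
From mathcomp Require Import all_boot all_order all_algebra.
From mathcomp Require Import boolp classical_sets reals.
From mathcomp.analysis Require Import sequences exp.
From mathcomp Require Import ring lra.
Import Order.TTheory GRing.Theory Num.Theory.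
Local Open Scope ring_scope.
Set Implicit Arguments. Unset Strict Implicit. Unset Printing Implicit Defensive.

Lemma distr_min (R : realDomainType) (a b : R) :
  `|a - b| = a + b - 2 * Num.min a b.
Proof.
case: (leP a b) => ab; last by rewrite ger0_norm ?subr_ge0 ?ltW //; lra.
by rewrite distrC ger0_norm ?subr_ge0 //; lra.
Qed.

Lemma min_le_weighted (R : realFieldType) (a b W : R) :
  0 <= a -> 0 <= b -> 0 < W ->
  Num.min a b <= (a * W + b / W) / 2.
Proof.
move=> a0 b0 W0; have Wi0 : 0 < W^-1 by rewrite invr_gt0.
have W2 : 2 <= W + W^-1.
  have WWi : W * W^-1 = 1 by rewrite mulfV ?gt_eqF.
  by have := mulr_ge0 (ltW Wi0) (sqr_ge0 (W - 1)); nra.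
have ma : Num.min a b <= a by rewrite ge_min lexx.
have mb : Num.min a b <= b by rewrite ge_min lexx orbT.
have c0 : 0 <= Num.min a b by rewrite le_min a0 b0.
by nra.
Qed.

(* With a / 0 = 0, the identity also holds when a = 0. *)
Lemma mulr_sqrt_div (R : rcfType) (a b : R) :
  0 <= a -> 0 <= b -> a * Num.sqrt (b / a) = Num.sqrt (a * b).
Proof.
rewrite le_eqVlt => /predU1P [<- _|a0 b0]; first by rewrite !mul0r sqrtr0.
rewrite -[a in a * _]ger0_norm ?ltW // -sqrtr_sqr -sqrtrM ?sqr_ge0 //.
by congr Num.sqrt; field; rewrite gt_eqF.
Qed.

Section Bernoulli.
Variable R : realType.
Implicit Types (p q : R) (w : bool -> R).

Definition bern p (c : bool) : R := if c then p else 1 - p.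

Definition bern_mean p w : R := p * w true + (1 - p) * w false.

Definition bhattacharyya p q : R :=
  Num.sqrt (p * q) + Num.sqrt ((1 - p) * (1 - q)).

Lemma bern_ge0 p c : 0 <= p <= 1 -> 0 <= bern p c.
Proof. by case: c => /=; lra. Qed.

Lemma bern_mean1 p : bern_mean p (fun=> 1) = 1.
Proof. by rewrite /bern_mean; ring. Qed.

Lemma bhattacharyyaC p q : bhattacharyya p q = bhattacharyya q p.
Proof. by rewrite /bhattacharyya mulrC [(1 - p) * _]mulrC. Qed.

Lemma bhattacharyya_ge0 p q : 0 <= bhattacharyya p q.
Proof. by rewrite addr_ge0 ?sqrtr_ge0. Qed.

Lemma bern_mean_sqrt_ratio p q : 0 <= p <= 1 -> 0 <= q <= 1 ->
  bern_mean p (fun c => Num.sqrt (bern q c / bern p c)) = bhattacharyya p q.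
Proof.
move=> p01 q01; have E c := mulr_sqrt_div (bern_ge0 c p01) (bern_ge0 c q01).
by rewrite /bern_mean /=; move: (E true) (E false) => /= -> ->.
Qed.

Lemma bhattacharyya_sqr_le p q : 0 <= p <= 1 -> 0 <= q <= 1 ->
  bhattacharyya p q ^+ 2 <= 1 - (p - q) ^+ 2.
Proof.
move=> /andP [p0 p1] /andP [q0 q1]; rewrite /bhattacharyya !sqrtrM ?subr_ge0 //.
set a := Num.sqrt p; set b := Num.sqrt (1 - p).
set c := Num.sqrt q; set e := Num.sqrt (1 - q).
have <- : a ^+ 2 = p by rewrite sqr_sqrtr.
have <- : c ^+ 2 = q by rewrite sqr_sqrtr.
have ab : a ^+ 2 + b ^+ 2 = 1 by rewrite !sqr_sqrtr ?subr_ge0 //; ring.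
have ce : c ^+ 2 + e ^+ 2 = 1 by rewrite !sqr_sqrtr ?subr_ge0 //; ring.
(* With a^2 + b^2 = c^2 + e^2 = 1, the slack is the square ((ae - bc)(ac - be))^2. *)
suff -> : 1 - (a ^+ 2 - c ^+ 2) ^+ 2
    = (a * c + b * e) ^+ 2 + ((a * e - b * c) * (a * c - b * e)) ^+ 2.
  by rewrite lerDl sqr_ge0.
set s := a ^+ 2 + b ^+ 2 in ab; set t := c ^+ 2 + e ^+ 2 in ce.
transitivity ((s * t) ^+ 2 - (a ^+ 2 * t - c ^+ 2 * s) ^+ 2); first by rewrite ab ce; ring.
transitivity ((a * c + b * e) ^+ 2 * (s * t) + ((a * e - b * c) * (a * c - b * e)) ^+ 2).
  by rewrite /s /t; ring.
by rewrite ab ce !mulr1.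
Qed.

Lemma bhattacharyya_le_expR p q : 0 <= p <= 1 -> 0 <= q <= 1 ->
  bhattacharyya p q <= expR (- ((p - q) ^+ 2 / 2)).
Proof.
move=> p01 q01; set E := expR _.
have E0 : 0 <= E by rewrite ltW ?expR_gt0.
have E2 : 1 - (p - q) ^+ 2 <= E ^+ 2.
  rewrite -expRM_natl mulrN mulrC mulfVK ?pnatr_eq0 //.
  by have := expR_ge1Dx (- (p - q) ^+ 2); lra.
rewrite -ler_sqr ?nnegrE ?bhattacharyya_ge0 //.
exact: le_trans (bhattacharyya_sqr_le p01 q01) E2.
Qed.

Lemma bhattacharyya_le_expR_gap p q (e : R) : 0 <= p <= 1 -> 0 <= q <= 1 ->
  0 <= e -> e <= `|q - p| -> bhattacharyya p q <= expR (- (e ^+ 2 / 2)).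
Proof.
move=> p01 q01 e0 ep; apply: le_trans (bhattacharyya_le_expR p01 q01) _.
have : e ^+ 2 <= (q - p) ^+ 2.
  by rewrite -[(q - p) ^+ 2]ger0_norm ?sqr_ge0 // normrX ler_sqr ?nnegrE.
by rewrite ler_expR -opprB sqrrN; lra.
Qed.

End Bernoulli.

Definition depends_on (T : Type) (m : nat) (F : bits m -> T) (A : {set 'I_m}) :=
  forall x y : bits m, {in A, x =1 y} -> F x = F y.

Section UniformMean.
Variables (R : realType) (m : nat).

Definition Eunif (F : bits m -> R) : R := (\sum_x F x) / 2 ^+ m.

Lemma expr2_neq0 k : (2 : R) ^+ k != 0.
Proof. by rewrite expf_neq0 // pnatr_eq0. Qed.

Lemma sum_bits_const (c : R) : \sum_(x : bits m) c = 2 ^+ m * c.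
Proof.
by rewrite sumr_const card_ffun card_bool card_ord -[c *+ _]mulr_natl natrX.
Qed.

Lemma Eunif_const (c : R) : Eunif (fun=> c) = c.
Proof. by rewrite /Eunif sum_bits_const mulrC mulKf ?expr2_neq0. Qed.

Lemma EunifD (F G : bits m -> R) : Eunif (F \+ G) = Eunif F + Eunif G.
Proof. by rewrite /Eunif big_split mulrDl. Qed.

Lemma EunifMr (F : bits m -> R) (a : R) : Eunif (fun x => F x * a) = Eunif F * a.
Proof. by rewrite /Eunif -big_distrl mulrAC. Qed.

Lemma ler_Eunif (F G : bits m -> R) : (forall x, F x <= G x) -> Eunif F <= Eunif G.
Proof. by move=> FG; rewrite ler_pM2r ?invr_gt0 ?exprn_gt0 // ler_sum. Qed.

Lemma Eunif_bool (c : bits m -> bool) (w : bool -> R) :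
  Eunif (fun x => w (c x)) = bern_mean (Eunif (fun x => (c x)%:R)) w.
Proof.
transitivity (Eunif (fun x => w false + (c x)%:R * (w true - w false))).
  by congr Eunif; apply: funext => x; case: (c x); rewrite ?mul1r ?mul0r ?addr0 // addrC subrK.
by rewrite EunifD Eunif_const EunifMr /bern_mean; ring.
Qed.

Definition splice (A : {set 'I_m}) (x y : bits m) : bits m :=
  [ffun j => if j \in A then x j else y j].

Lemma splice_pair_inj (A : {set 'I_m}) :
  injective (fun p : bits m * bits m => (splice A p.1 p.2, splice A p.2 p.1)).
Proof.
move=> [x y] [x' y'] /= [] /ffunP E1 /ffunP E2.
by congr pair; apply/ffunP => j; have := E1 j; have := E2 j; rewrite !ffunE; case: (j \in A).
Qed.

Lemma EunifM_disjoint (F G : bits m -> R) (A B : {set 'I_m}) :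
  depends_on F A -> depends_on G B -> [disjoint A & B] ->
  Eunif (F \* G) = Eunif F * Eunif G.
Proof.
move=> dF dG AB.
have key : (\sum_x F x) * (\sum_x G x) = 2 ^+ m * \sum_x F x * G x.
  rewrite big_distrl /=; under eq_bigr do rewrite big_distrr /=.
  (* Reindexing by the splice bijection makes both factors read the first string. *)
  rewrite pair_big /= (reindex_inj (@splice_pair_inj A)) /=.
  transitivity (\sum_(p : bits m * bits m) F p.1 * G p.1).
    apply: eq_bigr => -[x y] _ /=; congr (_ * _).
      by apply: dF => j jA; rewrite ffunE jA.
    apply: dG => j jB; rewrite ffunE; case: ifP => // jA.
    by move: (disjointFr AB jA); rewrite jB.
  rewrite -(pair_big predT predT (fun x (_ : bits m) => F x * G x)) /=.
  by under eq_bigr do rewrite sum_bits_const; rewrite -big_distrr.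
by have := expr2_neq0 m; rewrite /Eunif mulrACA key => ?; field.
Qed.

Lemma Eunif_prod_disjoint n (f : 'I_n -> bits m -> R) (D : 'I_n -> {set 'I_m})
    (s : seq 'I_n) :
  (forall i, depends_on (f i) (D i)) -> uniq s ->
  {in s &, forall i1 i2, i1 != i2 -> [disjoint D i1 & D i2]} ->
  Eunif (fun x => \prod_(i <- s) f i x) = \prod_(i <- s) Eunif (f i).
Proof.
move=> df; elim: s => [|i s IH] /=.
  by move=> _ _; rewrite big_nil; under eq_fun do rewrite big_nil; rewrite Eunif_const.
case/andP=> iNs us dis; rewrite big_cons; under eq_fun do rewrite big_cons.
rewrite (@EunifM_disjoint _ _ (D i) (\bigcup_(k in s) D k)) ?IH //.
- by move=> i1 i2 h1 h2; apply: dis; rewrite inE ?h1 ?h2 orbT.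
- move=> x y xy; rewrite !big_seq; apply: eq_bigr => k ks.
  by apply: df => j jD; apply: xy; apply/bigcupP; exists k.
- apply: bigcup_disjoint => k ks; apply: dis; rewrite ?inE ?eqxx ?ks ?orbT //.
  by apply: contraNneq iNs => ->.
Qed.

Definition setbit (x : bits m) (j : 'I_m) (c : bool) : bits m :=
  [ffun k => if k == j then c else x k].

Lemma flipK (j : 'I_m) : involutive (fun x : bits m => flip x j).
Proof. by move=> x; apply/ffunP => k; rewrite !ffunE; case: eqP; rewrite ?negbK. Qed.

Lemma Eunif_setbit (F : bits m -> R) (j : 'I_m) :
  Eunif F = (Eunif (fun x => F (setbit x j false)) + Eunif (fun x => F (setbit x j true))) / 2.
Proof.
have split2 : (\sum_x F x) *+ 2 = \sum_x (F (setbit x j false) + F (setbit x j true)).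
  rewrite mulr2n [X in _ + X](reindex_inj (inv_inj (@flipK j))) -big_split /=.
  apply: eq_bigr => x _.
  have xE : setbit x j (x j) = x by apply/ffunP => k; rewrite !ffunE; case: eqP => [->|].
  have -> : flip x j = setbit x j (~~ x j).
    by apply/ffunP => k; rewrite !ffunE; case: eqP => [->|].
  by rewrite -{1}xE; case: (x j); rewrite // addrC.
rewrite /Eunif -mulrDl -big_split -split2 mulr2n.
by have := expr2_neq0 m => ?; field.
Qed.

Lemma Eunif_dyadic (D : {set 'I_m}) (b : bits m -> bool) :
  depends_on b D -> exists k : int, Eunif (fun x => (b x)%:R) = k%:~R / 2 ^+ #|D|.
Proof.
move: {2}#|D| (erefl #|D|) => k; elim: k D b => [|k IH] D b cD bD.
  exists (b [ffun=> false])%:Z; rewrite cD divr1 -[RHS]Eunif_const.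
  congr Eunif; apply: funext => x; rewrite (bD x [ffun=> false]) // => j.
  by rewrite (cards0_eq cD) inE.
have /card_gt0P [j jD] : (0 < #|D|)%N by rewrite cD.
have cDj : #|D :\ j| = k by move: cD; rewrite (cardsD1 j D) jD add1n => -[].
have bDj c : depends_on (fun x => b (setbit x j c)) (D :\ j).
  move=> x y xy; apply: bD => j0 j0D; rewrite !ffunE; case: eqP => // /eqP j0j.
  by apply: xy; rewrite !inE j0j.
have [k0 E0] := IH _ _ cDj (bDj false); have [k1 E1] := IH _ _ cDj (bDj true).
exists (k0 + k1); rewrite (Eunif_setbit _ j) E0 E1 rmorphD /= cD cDj exprS.
by have := expr2_neq0 k => ?; field.
Qed.

End UniformMean.

Section IndependentBernoulli.
Variables (R : realType) (n : nat).
Implicit Types (P Q : bits n -> R) (S : {set 'I_n}) (p q : 'I_n -> R).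

(* Tested against all product weights: under P the coordinates y i, i \in S, are
   independent Bernoulli(p i). *)
Definition indep_bern_on P S p := forall w : 'I_n -> bool -> R,
  \sum_y P y * \prod_(i in S) w i (y i) = \prod_(i in S) bern_mean (p i) (w i).

Lemma indep_bern_on_sum1 P S p : indep_bern_on P S p -> \sum_y P y = 1.
Proof.
move/(_ (fun _ _ => 1)) => /=; under eq_bigr do rewrite big1_eq mulr1.
by move=> ->; rewrite big1 // => i _; apply: bern_mean1.
Qed.

Lemma indep_bern_on_le P S p i y : (forall y, 0 <= P y) ->
  indep_bern_on P S p -> i \in S -> P y <= bern (p i) (y i).
Proof.
move=> P0 hP iS; set w := fun j c => if j == i then (c == y i)%:R else 1 : R.
have prodE z : \prod_(j in S) w j (z j) = (z i == y i)%:R.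
  rewrite (bigD1 i) //= {1}/w eqxx big1 ?mulr1 // => j /andP [_ /negbTE jNi].
  by rewrite /w jNi.
have meanE : \prod_(j in S) bern_mean (p j) (w j) = bern (p i) (y i).
  rewrite (bigD1 i) //= big1 => [|j /andP [_ /negbTE jNi]]; last by rewrite /w jNi bern_mean1.
  by rewrite mulr1 /bern_mean /w eqxx; case: (y i) => /=; ring.
rewrite -meanE -hP; under eq_bigr do rewrite prodE.
by rewrite (bigD1 y) //= eqxx mulr1 lerDl sumr_ge0 // => z _; rewrite mulr_ge0.
Qed.

(* The weights W := prod_i sqrt(q_i / p_i) and 1/W are the densities that turn
   min(P, Q) <= (P W + Q / W) / 2 into a product of Bhattacharyya coefficients. *)
Lemma sum_min_le_prod_bhattacharyya P Q S p q :
  (forall y, 0 <= P y) -> (forall y, 0 <= Q y) ->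
  (forall i, 0 <= p i <= 1) -> (forall i, 0 <= q i <= 1) ->
  indep_bern_on P S p -> indep_bern_on Q S q ->
  \sum_y Num.min (P y) (Q y) <= \prod_(i in S) bhattacharyya (p i) (q i).
Proof.
move=> P0 Q0 p01 q01 hP hQ.
pose w i c := Num.sqrt (bern (q i) c / bern (p i) c).
pose v i c := Num.sqrt (bern (p i) c / bern (q i) c).
have minE y : Num.min (P y) (Q y)
    <= (P y * \prod_(i in S) w i (y i) + Q y * \prod_(i in S) v i (y i)) / 2.
  have [pos|] := boolP [forall i in S, (0 < bern (p i) (y i)) && (0 < bern (q i) (y i))].
    have {}pos i : i \in S -> 0 < bern (p i) (y i) /\ 0 < bern (q i) (y i).
      by move=> iS; apply/andP; move/forall_inP: pos; apply.
    have -> : \prod_(i in S) v i (y i) = (\prod_(i in S) w i (y i))^-1.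
      rewrite -prodfV; apply: eq_bigr => i /pos [p0 q0].
      by rewrite /v /w -sqrtrV ?invf_div // divr_ge0 ?ltW.
    apply: min_le_weighted => //; apply: prodr_gt0 => i /pos [p0 q0].
    by rewrite sqrtr_gt0 divr_gt0.
  have rhs0 : 0 <= (P y * \prod_(i in S) w i (y i) + Q y * \prod_(i in S) v i (y i)) / 2.
    by rewrite divr_ge0 // addr_ge0 // mulr_ge0 // prodr_ge0 // => *; apply: sqrtr_ge0.
  rewrite negb_forall_in => /existsP [i /andP [iS]].
  rewrite negb_and -!leNgt => /orP [] c0.
    have Py0 : P y <= 0 by apply: le_trans c0; apply: indep_bern_on_le hP iS.
    by apply: le_trans rhs0; rewrite ge_min Py0.
  have Qy0 : Q y <= 0 by apply: le_trans c0; apply: indep_bern_on_le hQ iS.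
  by apply: le_trans rhs0; rewrite ge_min Qy0 orbT.
apply: le_trans (ler_sum _ (fun y _ => minE y)) _.
rewrite -big_distrl big_split /= hP hQ.
under eq_bigr do rewrite bern_mean_sqrt_ratio //.
under [X in _ + X]eq_bigr do rewrite bern_mean_sqrt_ratio // bhattacharyyaC.
by rewrite -mulr2n -[_ *+ 2]mulr_natr mulfK ?pnatr_eq0.
Qed.

Lemma tvdist_min P Q : \sum_y P y = 1 -> \sum_y Q y = 1 ->
  tvdist P Q = 1 - \sum_y Num.min (P y) (Q y).
Proof.
move=> sP sQ; rewrite /tvdist; under eq_bigr do rewrite distr_min.
by rewrite sumrB big_split /= sP sQ -big_distrr /=; field.
Qed.

End IndependentBernoulli.

Lemma biasedU_ge0 (R : realType) n (gamma : R) (y : bits n) :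
  0 <= gamma <= 1 -> 0 <= biasedU gamma y.
Proof. by move=> g01; apply: prodr_ge0 => i _; apply: (@bern_ge0 _ gamma (y i)). Qed.

Lemma biasedU_indep_bern (R : realType) n (gamma : R) (S : {set 'I_n}) :
  indep_bern_on (biasedU gamma) S (fun=> gamma).
Proof.
move=> w; transitivity (\sum_(y : bits n) \prod_i
    (bern gamma (y i) * (if i \in S then w i (y i) else 1))).
  by apply: eq_bigr => y _; rewrite /biasedU big_split /= -big_mkcond.
rewrite -(bigA_distr_bigA (fun i c => bern gamma c * (if i \in S then w i c else 1))).
rewrite [RHS]big_mkcond; apply: eq_bigr => i _; rewrite big_bool /=.
by case: (i \in S); rewrite // !mulr1 addrC subrK.
Qed.

Lemma err_ge0 (R : realType) (gamma : R) t : 0 <= err gamma t.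
Proof.
apply: lb_le_inf; first by exists `|gamma - 0%:~R / 2 ^+ t|, 0.
by move=> _ [k _ <-].
Qed.

Lemma err_le (R : realType) (gamma : R) t (k : int) :
  err gamma t <= `|gamma - k%:~R / 2 ^+ t|.
Proof. by apply: ge_inf; [exists 0 => _ [k0 _ <-] | exists k]. Qed.

Lemma dyadic_widen (R : realType) (k : int) s t : (s <= t)%N ->
  k%:~R / 2 ^+ s = (k * (2 ^ (t - s))%N%:Z)%:~R / 2 ^+ t :> R.
Proof.
move=> st; rewrite intrM /= -pmulrn natrX -[in 2 ^+ t](subnK st) exprD.
by rewrite invfM mulrA mulfK ?expr2_neq0.
Qed.

Lemma depends_on_depset m n (g : bits m -> bits n) (i : 'I_n) :
  depends_on (fun x => g x i) (depset g i).
Proof.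
move=> x y; move: {2}#|[set j | x j != y j]| (leqnn #|[set j | x j != y j]|) => k.
elim: k x => [|k IH] x hk xy.
  suff -> : x = y by [].
  apply/ffunP => j; apply/eqP/negPn/negP => hj.
  by move: hk; rewrite leqn0 => /eqP/cards0_eq/setP/(_ j); rewrite !inE hj.
case: (pickP (fun j => x j != y j)) => [j hj|hn]; last first.
  by congr (g _ i); apply/ffunP => j; apply/eqP/negPn; rewrite hn.
have jND : j \notin depset g i by apply/negP => /xy /eqP; rewrite (negbTE hj).
have <- : g (flip x j) i = g x i.
  by move: jND; rewrite inE negb_exists => /forallP /(_ x); rewrite negbK => /eqP.
apply: IH => [|j0 j0D]; last first.
  by rewrite ffunE; case: eqP => [e|_]; [move: jND; rewrite -e j0D | exact: xy].
have sub : [set j0 | flip x j j0 != y j0] \subset [set j0 | x j0 != y j0] :\ j.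
  apply/fintype.subsetP => j0; rewrite !inE !ffunE.
  by case: (j0 =P j) => [->|_] //=; move: hj; case: (x j); case: (y j).
move: hk; rewrite (cardsD1 j [set j0 | x j0 != y j0]) inE hj /= => hk.
by rewrite -ltnS (leq_ltn_trans (subset_leq_card sub)).
Qed.

Section LocalFunction.
Variables (R : realType) (m n : nat) (g : bits m -> bits n).

Lemma sum_pushU_mul (h : bits n -> R) :
  \sum_y pushU R g y * h y = Eunif (fun x => h (g x)).
Proof.
rewrite /pushU /Eunif.
under eq_bigr => y _.
  rewrite -sum1_card natr_sum big_mkcond mulrAC big_distrl /=.
  over.
rewrite -big_distrl exchange_big /=; congr (_ * _); apply: eq_bigr => x _.
rewrite (bigD1 (g x)) //= inE eqxx mul1r big1 ?addr0 // => y /negbTE yNg.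
by rewrite inE eq_sym yNg mul0r.
Qed.

Lemma pushU_ge0 y : 0 <= pushU R g y.
Proof. by rewrite divr_ge0 ?exprn_ge0. Qed.

Definition bit_mean (i : 'I_n) : R := Eunif (fun x => (g x i)%:R).

Lemma bit_mean_01 i : 0 <= bit_mean i <= 1.
Proof.
by rewrite -[0](Eunif_const m) -[1](Eunif_const m) !ler_Eunif // => x; case: (g x i).
Qed.

Lemma pushU_indep_bern (S : {set 'I_n}) :
  {in S &, forall i1 i2, i1 != i2 -> [disjoint depset g i1 & depset g i2]} ->
  indep_bern_on (pushU R g) S bit_mean.
Proof.
move=> dis w; rewrite sum_pushU_mul; under eq_fun do rewrite -big_enum.
rewrite (Eunif_prod_disjoint (D := depset g)).
- by rewrite big_enum; apply: eq_bigr => i _; rewrite Eunif_bool.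
- by move=> i x y xy; rewrite (depends_on_depset xy).
- exact: enum_uniq.
- by move=> i1 i2; rewrite !mem_enum; apply: dis.
Qed.

Lemma err_le_bit_mean (gamma : R) d i :
  d_local d g -> err gamma d <= `|gamma - bit_mean i|.
Proof.
move=> /(_ i) dg; rewrite /bit_mean.
have [k ->] := Eunif_dyadic R (depends_on_depset (g := g) (i := i)).
by rewrite (dyadic_widen R k dg) err_le.
Qed.

End LocalFunction.

Unset Implicit Arguments.

Theorem mainTheorem3 (R : realType) (gamma : R) (m n d r : nat)
  (g : bits m -> bits n) :
  0 <= gamma <= 1 -> dr_local d r g ->
  tvdist (pushU R g) (biasedU gamma)
    >= 1 - 2 * expR (- ((err gamma d) ^+ 2 * r%:R / 2)).
Proof.
move=> g01 [dg [S [cS disS]]].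
have hP := pushU_indep_bern (R := R) disS; have hQ := biasedU_indep_bern gamma S.
rewrite (tvdist_min (indep_bern_on_sum1 hP) (indep_bern_on_sum1 hQ)).
have := sum_min_le_prod_bhattacharyya (pushU_ge0 R g) (fun y => biasedU_ge0 y g01)
  (bit_mean_01 R g) (fun=> g01) hP hQ.
have : \prod_(i in S) bhattacharyya (bit_mean R g i) gamma
    <= expR (- (err gamma d ^+ 2 / 2)) ^+ r.
  rewrite -cS -prodr_const; apply: ler_prod => i _.
  rewrite bhattacharyya_ge0 bhattacharyya_le_expR_gap ?bit_mean_01 ?err_ge0 //.
  exact: err_le_bit_mean.
rewrite -expRM_natl (_ : _ * - _ = - (err gamma d ^+ 2 * r%:R / 2)); last by ring.
have := expR_gt0 (- (err gamma d ^+ 2 * r%:R / 2)); lra.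
Qed.
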